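(* Let $\Gamma=\langle V,(w_u)_{u\in V},\alpha,\beta\rangle$ be a celebrity game with $\beta>1$, $n=|V|$, $W=\sum_{u\in V}w_u$ and $w_{\max}=\max_u w_u$. The following are equivalent: (1) $\Gamma$ is a star celebrity game; (2) either $\alpha<w_{\max}$, or $\alpha\ge w_{\max}$ and there is at most one $u\in V$ with $\alpha>W-w_u$; (3) a star graph $S_n$ on $V$ (a tree with one vertex adjacent to all others) is a Nash equilibrium graph of $\Gamma$.
   Context: A celebrity game $\Gamma=\langle V,(w_u)_{u\in V},\alpha,\beta\rangle$ consists of a set of players $V=\{1,\dots,n\}$, celebrity weights $w_u>0$, a link cost $\alpha>0$ and a critical distance $\beta$ with $1\le\beta\le n-1$. A strategy of player $u$ is a set $S_u\subseteq V\setminus\{u\}$; a strategy profile is $S=(S_1,\dots,S_n)$; its outcome graph $G[S]$ is the undirected graph on $V$ with edge set $\{\{u,v\}: u\in S_v\text{ or }v\in S_u\}$. With $d_G$ the graph distance (infinite between different connected components), the cost of player $u$ is $c_u(S)=\alpha|S_u|+\sum_{v:\,d_{G[S]}(u,v)>\beta}w_v$. $S$ is a Nash equilibrium if no player can strictly decrease its cost by changing only its own strategy; a graph $G$ is a Nash equilibrium graph of $\Gamma$ if $G=G[S]$ for some Nash equilibrium $S$. $\Gamma$ is a star celebrity game if it has a Nash equilibrium graph that is connected. *)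

From mathcomp Require Import all_boot all_order all_algebra.
Set Implicit Arguments. Unset Strict Implicit. Unset Printing Implicit Defensive.
Import Order.TTheory GRing.Theory Num.Theory.
Local Open Scope ring_scope.

(* A strategy profile: each player u buys links to the set S u. *)
Definition profile (n : nat) := 'I_n -> {set 'I_n}.

Definition valid_strategy (n : nat) (u : 'I_n) (Su : {set 'I_n}) : bool :=
  u \notin Su.
Definition valid_profile (n : nat) (S : profile n) : Prop :=
  forall u, valid_strategy u (S u).

Definition outcome (n : nat) (S : profile n) : rel 'I_n :=
  fun u v => (u \in S v) || (v \in S u).

(* d_G(u,v) <= k : there is a walk from u to v in G with at most k edges.
   Hence d_G(u,v) > k (including infinite distance) iff ~~ within G k u v. *)
Definition within (n : nat) (G : rel 'I_n) (k : nat) (u v : 'I_n) : bool :=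
  [exists m : 'I_k.+1, exists p : m.-tuple 'I_n,
     path G u p && (last u p == v)].

Definition deviate (n : nat) (S : profile n) (u : 'I_n) (Su : {set 'I_n})
  : profile n := fun v => if v == u then Su else S v.

Definition cost (R : realFieldType) (n : nat) (w : 'I_n -> R) (alpha : R)
  (beta : nat) (S : profile n) (u : 'I_n) : R :=
  alpha * (#|S u|)%:R +
  \sum_(v : 'I_n | ~~ within (outcome S) beta u v) w v.

Definition nash (R : realFieldType) (n : nat) (w : 'I_n -> R) (alpha : R)
  (beta : nat) (S : profile n) : Prop :=
  valid_profile S /\
  forall (u : 'I_n) (Su : {set 'I_n}), valid_strategy u Su ->
    cost w alpha beta S u <= cost w alpha beta (deviate S u Su) u.

Definition ne_graph (R : realFieldType) (n : nat) (w : 'I_n -> R) (alpha : R)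
  (beta : nat) (G : rel 'I_n) : Prop :=
  exists S : profile n, nash w alpha beta S /\ forall u v, outcome S u v = G u v.

Definition connected_graph (n : nat) (G : rel 'I_n) : Prop :=
  forall u v : 'I_n, connect G u v.

Definition star_celebrity_game (R : realFieldType) (n : nat) (w : 'I_n -> R)
  (alpha : R) (beta : nat) : Prop :=
  exists G : rel 'I_n, ne_graph w alpha beta G /\ connected_graph G.

Definition star_graph (n : nat) (G : rel 'I_n) : Prop :=
  exists c : 'I_n, forall u v, G u v = (u != v) && ((u == c) || (v == c)).

Definition totalW (R : realFieldType) (n : nat) (w : 'I_n -> R) : R :=
  \sum_(u : 'I_n) w u.

Definition wmax (R : realFieldType) (n : nat) (w : 'I_n -> R) : R :=
  \big[Num.max/0]_(u : 'I_n) w u.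

From mathcomp Require Import all_boot all_order all_algebra.
From mathcomp Require Import lra zify.
Import Order.TTheory GRing.Theory Num.Theory.
Local Open Scope ring_scope.
Set Implicit Arguments. Unset Strict Implicit.

(* A player u can always secure cost at most W - w_u by buying nothing, so in
   a Nash equilibrium alpha |S_u| <= W - w_u; in particular a player with
   W - w_u < alpha buys no link.  If two players u1 != u2 have
   W - w_ui < alpha, the weight bound forces every player to buy at most one
   link; along a simple path from u1 each vertex has then spent its only link
   on its predecessor, so the last vertex u2 must buy one: the graph is
   disconnected.  Conversely, when at most one player u has W - w_u < alpha
   (which is automatic if some w_c exceeds alpha), the star centred at that
   player, each leaf buying its link to the centre, is an equilibrium: with
   beta >= 2 nobody is ever far, a leaf pays alpha and would pay at least
   W - w_v >= alpha by deviating. *)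

Lemma within_refl n (G : rel 'I_n) k u : within G k u u.
Proof. by apply/existsP; exists ord0; apply/existsP; exists [tuple]; rewrite /= eqxx. Qed.

Lemma within_isolated n (G : rel 'I_n) k u v :
  (forall z, G u z = false) -> u != v -> ~~ within G k u v.
Proof.
move=> Gu0 neq_uv; apply/existsP => -[m /existsP [[[|y p] _] /andP [/= walk_up]]].
  by move/eqP=> eq_uv; rewrite eq_uv eqxx in neq_uv.
by rewrite Gu0 in walk_up.
Qed.

Lemma star_within n (G : rel 'I_n) (c : 'I_n) k :
  (1 < k)%N -> (forall x y, G x y = (x != y) && ((x == c) || (y == c))) ->
  forall u v, within G k u v.
Proof.
move=> k_gt1 Gstar u v.
have [->|neq_uv] := eqVneq u v; first exact: within_refl.
have lt1k : (1 < k.+1)%N by lia.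
have lt2k : (2 < k.+1)%N by lia.
have [eq_uc|neq_uc] := eqVneq u c.
  apply/existsP; exists (Ordinal lt1k); apply/existsP; exists [tuple v].
  by rewrite /= Gstar neq_uv eq_uc eqxx /=.
have [eq_vc|neq_vc] := eqVneq v c.
  apply/existsP; exists (Ordinal lt1k); apply/existsP; exists [tuple v].
  by rewrite /= Gstar neq_uv eq_vc eqxx orbT /=.
apply/existsP; exists (Ordinal lt2k); apply/existsP; exists [tuple c; v].
by rewrite /= !Gstar neq_uc eqxx orbT (eq_sym c v) neq_vc /=.
Qed.

Lemma star_graph_connected n (G : rel 'I_n) : star_graph G -> connected_graph G.
Proof.
case=> c Gstar u v.
have to_c x : connect G x c.
  have [->|neq_xc] := eqVneq x c; first exact: connect0.
  by apply: connect1; rewrite Gstar neq_xc eqxx orbT.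
have from_c x : connect G c x.
  have [->|neq_xc] := eqVneq x c; first exact: connect0.
  by apply: connect1; rewrite Gstar eq_sym neq_xc eqxx.
exact: connect_trans (to_c u) (from_c v).
Qed.

(* If [prev] bought its link to [x] and everybody buys at most one link, then
   along a simple path from [x] every edge is bought by its far end. *)
Lemma simple_path_last_buys n (S : profile n) :
  (forall v, (#|S v| <= 1)%N) ->
  forall p x prev, prev \in S x -> path (outcome S) x p ->
  uniq (prev :: x :: p) -> (0 < #|S (last x p)|)%N.
Proof.
move=> buys_le1; elim=> [|y p IHp] x prev Sx_prev /=.
  by move=> _ _; apply/card_gt0P; exists prev.
case/andP=> /orP [Sy_x|Sx_y] walk uniq_p.
  by apply: IHp Sy_x walk _; case/andP: uniq_p.
have := buys_le1 x; rewrite leqNgt => /negP; case; apply/card_gt1P.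
exists prev, y; split=> //; apply/eqP => eq_prev_y.
by move: uniq_p; rewrite eq_prev_y /= !inE eqxx orbT.
Qed.

Lemma unbought_disconnected n (S : profile n) u1 u2 :
  (forall v, (#|S v| <= 1)%N) -> S u1 = set0 -> S u2 = set0 -> u1 != u2 ->
  ~~ connect (outcome S) u1 u2.
Proof.
move=> buys_le1 Su1 Su2 neq_u12; apply/negP => /connectP [p walk].
case/shortenP: walk => [[|y q]] /=; first by move=> _ _ _ eq_u12; rewrite eq_u12 eqxx in neq_u12.
case/andP=> /orP [Sy_u1|]; last by rewrite Su1 in_set0.
move=> walk uniq_q _ eq_u2; have := simple_path_last_buys buys_le1 Sy_u1 walk uniq_q.
by rewrite -eq_u2 Su2 cards0.
Qed.

Lemma deviate_self n (S : profile n) u T : deviate S u T u = T.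
Proof. by rewrite /deviate eqxx. Qed.

Lemma outcome_deviate_set0 n (S : profile n) u :
  (forall z, u \notin S z) -> forall z, outcome (deviate S u set0) u z = false.
Proof.
move=> unlinked z; rewrite /outcome deviate_self in_set0 orbF /deviate.
by case: eqVneq => _; [exact: in_set0 | exact: negbTE].
Qed.

Definition star_profile n (c : 'I_n) : profile n :=
  fun v => if v == c then set0 else [set c].

Lemma outcome_star_profile n (c : 'I_n) x y :
  outcome (star_profile c) x y = (x != y) && ((x == c) || (y == c)).
Proof.
rewrite /outcome /star_profile.
have [->|neq_xc] := eqVneq x c; have [->|neq_yc] := eqVneq y c.
all: by rewrite ?in_set0 ?in_set1 ?eqxx ?neq_xc ?(negbTE neq_xc) ?(negbTE neq_yc) ?andbF.
Qed.

Lemma star_profile_leaf_unlinked n (c u : 'I_n) :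
  u != c -> forall z, u \notin star_profile c z.
Proof. by move=> neq_uc z; rewrite /star_profile; case: ifP; rewrite ?in_set0 ?in_set1. Qed.

Section CelebrityGame.

Variables (R : realFieldType) (n : nat) (w : 'I_n -> R) (alpha : R) (beta : nat).
Hypothesis w_ge0 : forall u, 0 <= w u.
Hypothesis alpha_ge0 : 0 <= alpha.

Definition far_weight (G : rel 'I_n) u := \sum_(v | ~~ within G beta u v) w v.

Lemma costE S u :
  cost w alpha beta S u = alpha * (#|S u|)%:R + far_weight (outcome S) u.
Proof. by []. Qed.

Lemma cost_deviate S u T :
  cost w alpha beta (deviate S u T) u =
  alpha * (#|T|)%:R + far_weight (outcome (deviate S u T)) u.
Proof. by rewrite costE deviate_self. Qed.

Lemma far_weight_ge0 G u : 0 <= far_weight G u.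
Proof. exact: sumr_ge0. Qed.

Lemma totalW_minus u : totalW w - w u = \sum_(v | v != u) w v.
Proof. by rewrite /totalW (bigD1 u) //= addrC addrK. Qed.

Lemma far_weight_le G u : far_weight G u <= totalW w - w u.
Proof.
rewrite totalW_minus /far_weight big_mkcond [leRHS]big_mkcond /=.
apply: ler_sum => v _; have [->|_] := eqVneq v u; first by rewrite within_refl.
by case: ifP => // _; exact: w_ge0.
Qed.

Lemma far_weight_isolated G u :
  (forall z, G u z = false) -> far_weight G u = totalW w - w u.
Proof.
move=> Gu0; rewrite totalW_minus /far_weight; apply: eq_bigl => v.
have [->|neq_vu] := eqVneq v u; first by rewrite within_refl.
by rewrite (within_isolated _ Gu0) // eq_sym.
Qed.

Lemma weight_le_totalW_minus a b : a != b -> w a <= totalW w - w b.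
Proof.
move=> neq_ab; rewrite totalW_minus (bigD1 a) //= lerDl; exact: sumr_ge0.
Qed.

Lemma weight2_le_totalW_minus a b c :
  a != b -> a != c -> b != c -> w a + w b <= totalW w - w c.
Proof.
move=> neq_ab neq_ac neq_bc.
rewrite totalW_minus (bigD1 a) //= (bigD1 b) /=; last by rewrite neq_bc eq_sym.
by rewrite addrA lerDl; apply: sumr_ge0.
Qed.

Lemma nash_links_le S u :
  nash w alpha beta S -> alpha * (#|S u|)%:R <= totalW w - w u.
Proof.
case=> _ /(_ u set0) no_better.
have := no_better (negbT (in_set0 u)); rewrite cost_deviate costE cards0 mulr0 add0r.
have := far_weight_ge0 (outcome S) u; have := far_weight_le (outcome (deviate S u set0)) u.
lra.
Qed.

Lemma nash_cheap_buys_nothing S u :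
  nash w alpha beta S -> totalW w - w u < alpha -> S u = set0.
Proof.
move=> NE cheap; apply/eqP; rewrite -cards_eq0 eqn0Ngt; apply/negP => buys.
have := nash_links_le u NE; have : alpha <= alpha * (#|S u|)%:R by rewrite ler_peMr // ler1n.
lra.
Qed.

(* Adding the two cheap inequalities, [2 alpha <= W - w_v] would give
   [W + w_v < w_u1 + w_u2 <= W - w_v]. *)
Lemma nash_two_cheap_buys_le1 S u1 u2 :
  nash w alpha beta S -> u1 != u2 ->
  totalW w - w u1 < alpha -> totalW w - w u2 < alpha -> forall v, (#|S v| <= 1)%N.
Proof.
move=> NE neq_u12 cheap1 cheap2 v.
have [<-|neq_u1v] := eqVneq u1 v; first by rewrite (nash_cheap_buys_nothing NE cheap1) cards0.
have [<-|neq_u2v] := eqVneq u2 v; first by rewrite (nash_cheap_buys_nothing NE cheap2) cards0.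
rewrite leqNgt; apply/negP => buys2.
have := nash_links_le v NE; have : alpha * 2%:R <= alpha * (#|S v|)%:R.
  by apply: ler_wpM2l; rewrite ?ler_nat.
have := weight2_le_totalW_minus neq_u12 neq_u1v neq_u2v.
have := w_ge0 v; lra.
Qed.

Definition cheap_players := [set u : 'I_n | totalW w - w u < alpha].

Lemma nash_connected_cheap_le1 S :
  nash w alpha beta S -> (forall u v, connect (outcome S) u v) ->
  (#|cheap_players| <= 1)%N.
Proof.
move=> NE conn; apply/card_le1_eqP => u1 u2; rewrite !inE => cheap1 cheap2.
have [//|neq_u12] := eqVneq u1 u2.
have buys_le1 := nash_two_cheap_buys_le1 NE neq_u12 cheap1 cheap2.
have := unbought_disconnected buys_le1 (nash_cheap_buys_nothing NE cheap1)
  (nash_cheap_buys_nothing NE cheap2) neq_u12.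
by rewrite conn.
Qed.

Lemma lt_wmax_cheap_le1 : alpha < wmax w -> (#|cheap_players| <= 1)%N.
Proof.
move=> alpha_lt_wmax.
have [c alpha_lt_wc] : exists c, alpha < w c.
  case: (pickP (fun c => alpha < w c)) => [c|none]; first by exists c.
  have : wmax w <= alpha by apply/bigmax_leP; split=> // c _; rewrite leNgt none.
  by rewrite leNgt alpha_lt_wmax.
suff cheap_c u : u \in cheap_players -> u = c by apply/card_le1_eqP => u v /cheap_c-> /cheap_c->.
rewrite inE => cheap_u; have [->//|neq_cu] := eqVneq c u.
exfalso; have := weight_le_totalW_minus neq_cu; lra.
Qed.

Lemma wmax_cond_cheap_le1 :
  (alpha < wmax w \/ (wmax w <= alpha /\ (#|cheap_players| <= 1)%N)) <->
  (#|cheap_players| <= 1)%N.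
Proof.
split; first by case=> [/lt_wmax_cheap_le1|[]].
by move=> cheap_le1; case: (ltP alpha (wmax w)) => alpha_wmax; [left | right].
Qed.

Lemma cheap_le1_star_center (c0 : 'I_n) :
  (#|cheap_players| <= 1)%N -> exists c, forall v, v != c -> alpha <= totalW w - w v.
Proof.
move=> /card_le1_eqP cheap_le1.
case: (pickP (fun u => u \in cheap_players)) => [c cheap_c|none].
  exists c => v neq_vc; rewrite leNgt; apply/negP => cheap_v.
  have eq_vc : v = c by apply: cheap_le1; rewrite // inE.
  by rewrite eq_vc eqxx in neq_vc.
by exists c0 => v _; move: (none v); rewrite inE => /negbT; rewrite -leNgt.
Qed.

Lemma star_profile_nash c :
  (1 < beta)%N -> (forall v, v != c -> alpha <= totalW w - w v) ->
  nash w alpha beta (star_profile c).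
Proof.
move=> beta_gt1 leaves_ok; split.
  by move=> u; rewrite /valid_strategy /star_profile; case: eqVneq => [->|];
    rewrite ?in_set0 ?in_set1.
move=> u T _; rewrite cost_deviate costE.
have -> : far_weight (outcome (star_profile c)) u = 0.
  by apply: big_pred0 => v; rewrite (star_within beta_gt1 (@outcome_star_profile n c)).
have far_ge0 := far_weight_ge0 (outcome (deviate (star_profile c) u T)) u.
rewrite addr0 {1}/star_profile; have [_|neq_uc] := eqVneq u c.
  by rewrite cards0 mulr0 addr_ge0 // mulr_ge0.
rewrite cards1 mulr1; have [->|[t Tt]] := set_0Vmem T.
  rewrite cards0 mulr0 add0r far_weight_isolated ?leaves_ok //.
  exact/outcome_deviate_set0/star_profile_leaf_unlinked.
have : alpha <= alpha * (#|T|)%:R by rewrite ler_peMr // ler1n card_gt0; apply/set0Pn; exists t.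
lra.
Qed.

End CelebrityGame.

Theorem corollary2 (R : realFieldType) (n : nat) (w : 'I_n -> R) (alpha : R)
  (beta : nat) :
  (forall u, 0 < w u) -> 0 < alpha ->
  (1 <= beta)%N -> (beta <= n.-1)%N -> (1 < beta)%N ->
  (star_celebrity_game w alpha beta <->
   (alpha < wmax w \/
    (wmax w <= alpha /\ (#|[set u : 'I_n | (totalW w - w u < alpha)%R]| <= 1)%N)))
  /\
  ((alpha < wmax w \/
    (wmax w <= alpha /\ (#|[set u : 'I_n | (totalW w - w u < alpha)%R]| <= 1)%N))
   <-> exists G : rel 'I_n, star_graph G /\ ne_graph w alpha beta G).
Proof.
move=> w_gt0 alpha_gt0 _ beta_le beta_gt1.
have w_ge0 u : 0 <= w u by exact: ltW.
have alpha_ge0 := ltW alpha_gt0.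
have n_gt0 : (0 < n)%N by lia.
rewrite (wmax_cond_cheap_le1 w_ge0 alpha_ge0).
have star_of_cheap : (#|cheap_players w alpha| <= 1)%N ->
    exists G, star_graph G /\ ne_graph w alpha beta G.
  case/(cheap_le1_star_center (Ordinal n_gt0)) => c leaves_ok.
  exists (outcome (star_profile c)); split; first by exists c; exact: outcome_star_profile.
  by exists (star_profile c); split; first exact: star_profile_nash.
have cheap_of_game : star_celebrity_game w alpha beta -> (#|cheap_players w alpha| <= 1)%N.
  case=> G [[S [NE SG]] G_conn]; apply: (nash_connected_cheap_le1 w_ge0 alpha_ge0 NE).
  by move=> u v; rewrite (eq_connect SG).
have game_of_star : (exists G, star_graph G /\ ne_graph w alpha beta G) ->
    star_celebrity_game w alpha beta.
  by case=> G [G_star NE]; exists G; split; last exact: star_graph_connected.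
by split; split; auto.
Qed.
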